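(* A connected component $B^\ell$ of nonabsorbing action profiles is rectangular if and only if there is no joint exit at any mixed action profile in $X^\ell$, i.e., ${\cal E}_J(x)=\emptyset$ for all $x\in X^\ell$.
   Context: $I$ is a finite set of players, $A_i$ finite nonempty action sets, $A=\prod_iA_i$, $p:A\to[0,1]$. $B=\{a\in A:p(a)=0\}$; the connected components $B^1,\dots,B^L$ of nonabsorbing action profiles are the connected components of the graph on $B$ in which $a,a'$ are adjacent iff $a_{-i}=a'_{-i}$ for some $i\in I$. $B^\ell$ is rectangular if $B^\ell=\prod_{i\in I}B^\ell_i$ for some $B^\ell_i\subseteq A_i$. Let $\Xi=\prod_i\Delta(A_i)$, $p(x)=\sum_ap(a)\prod_jx_j(a_j)$ (multilinear extension), and $X^\ell:=\{x\in\Xi:\prod_i{\rm supp}(x_i)\subseteq B^\ell\}$. For $x\in X^\ell$, a pair $(J,a_J)$ with $\emptyset\ne J\subseteq I$, $a_J\in\prod_{i\in J}A_i$ is an exit at $x$ if $p(a_J,x_{-J})>0$ and $p(a_{J'},x_{-J'})=0$ for every proper subset $J'\subsetneq J$; it is a joint exit if $|J|\ge2$. ${\cal E}_J(x)$ is the set of joint exits at $x$. *)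

From HB Require Import structures.
From mathcomp Require Import all_boot all_order all_algebra.
Set Implicit Arguments. Unset Strict Implicit. Unset Printing Implicit Defensive.
Import Order.TTheory GRing.Theory Num.Theory.
Local Open Scope ring_scope.

Section Defs.
Variables (I : finType) (A : I -> finType) (R : realFieldType).

Definition profile := {dffun forall i : I, A i}.

Definition mixed_profile (x : forall i : I, A i -> R) : Prop :=
  forall i, (forall ai, 0 <= x i ai) /\ \sum_(ai : A i) x i ai = 1.

Definition pext (p : profile -> R) (x : forall i : I, A i -> R) : R :=
  \sum_(a : profile) p a * \prod_(j : I) x j (a j).

Definition deviate (J : {set I}) (a : profile) (x : forall i : I, A i -> R)
  : forall i : I, A i -> R :=
  fun i => if i \in J then (fun b : A i => (b == a i)%:R) else x i.

Definition adjB (p : profile -> R) : rel profile :=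
  fun a a' => [&& p a == 0, p a' == 0 &
     [exists i : I, [forall j : I, (j != i) ==> (a j == a' j)]]].

Definition component (p : profile -> R) (a0 : profile) : {set profile} :=
  [set a | connect (adjB p) a0 a].

Definition rectangular (C : {set profile}) : Prop :=
  exists Bi : forall i : I, {set A i},
    forall a : profile, a \in C <-> (forall i, a i \in Bi i).

Definition X_of (C : {set profile}) (x : forall i : I, A i -> R) : Prop :=
  mixed_profile x /\
  forall a : profile, (forall i, 0 < x i (a i)) -> a \in C.

(* (J, a_J) is an exit at x; a_J is represented by a full profile a whose
   coordinates outside J are irrelevant *)
Definition is_exit (p : profile -> R) (x : forall i : I, A i -> R)
  (J : {set I}) (a : profile) : Prop :=
  J != set0 /\ 0 < pext p (deviate J a x) /\
  forall J' : {set I}, J' \proper J -> pext p (deviate J' a x) = 0.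

Definition is_joint_exit p x J a : Prop := is_exit p x J a /\ (2 <= #|J|)%N.

End Defs.

From HB Require Import structures.
From mathcomp Require Import all_boot all_order all_algebra.
From mathcomp Require Import lra.
Set Implicit Arguments. Unset Strict Implicit. Unset Printing Implicit Defensive.
Import Order.TTheory GRing.Theory Num.Theory.
Local Open Scope ring_scope.

(* Rectangular implies no joint exit: if B = prod_i B_i and (J, a_J) is an
   exit at x, some absorbing profile is played with positive probability under
   (a_J, x_{-J}); as supp x lies in B, it leaves B through a coordinate i in J,
   so a_i is not in B_i.  Replacing the i-th coordinate of a full-support
   profile y of x by a_i then leaves B while staying adjacent to y, so the
   result is absorbing and ({i}, a_i) already exits: J is not minimal.
   No joint exit implies rectangular: at a pure profile d of B, the absence of
   a joint exit says that if changing d in coordinate i and changing it in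
   coordinate k both stay in B, so does changing both.  Propagating this along
   a path in B shows that B is closed under replacing one coordinate by that of
   another profile of B, hence B is the product of its projections. *)

Section Splice.
Variables (I : finType) (A : I -> finType).

Definition splice (K : {set I}) (a b : profile A) : profile A :=
  finfun (fun k => if k \in K then a k else b k).

Lemma spliceE K (a b : profile A) k : splice K a b k = if k \in K then a k else b k.
Proof. by rewrite ffunE. Qed.

Lemma splice0 (a b : profile A) : splice set0 a b = b.
Proof. by apply/ffunP => k; rewrite spliceE inE. Qed.

Lemma splice_id K (b : profile A) : splice K b b = b.
Proof. by apply/ffunP => k; rewrite spliceE if_same. Qed.

End Splice.

Section MultilinearExtension.
Variables (I : finType) (A : I -> finType) (R : realFieldType).
Variable p : profile A -> R.
Hypothesis p_ge0 : forall a, 0 <= p a.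

Definition pure (t : profile A) : forall i : I, A i -> R :=
  fun i s => (s == t i)%:R.

Lemma pext_pure (x : forall i, A i -> R) (t : profile A) :
  (forall i s, x i s = pure t s) -> pext p x = p t.
Proof.
move=> xE; rewrite /pext (bigD1 t) //= [X in _ + X]big1 => [|b bt].
  by rewrite addr0 big1 ?mulr1 // => j _; rewrite xE /pure eqxx.
have [j bjt] : exists j, b j != t j.
  apply/existsP; apply: contraNT bt => /existsPn tb.
  by apply/eqP/ffunP => j; apply/eqP/negPn.
by rewrite (bigD1 j) //= xE /pure (negbTE bjt) mul0r mulr0.
Qed.

Lemma pext_deviate_pure K (a d : profile A) :
  pext p (deviate K a (pure d)) = p (splice K a d).
Proof. by apply: pext_pure => i s; rewrite /deviate /pure spliceE; case: (i \in K). Qed.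

Lemma pext_gt0P (x : forall i, A i -> R) : (forall i s, 0 <= x i s) ->
  0 < pext p x <-> exists t : profile A, 0 < p t /\ forall i, 0 < x i (t i).
Proof.
move=> x_ge0; have term_ge0 t : 0 <= p t * \prod_j x j (t j).
  by rewrite mulr_ge0 ?prodr_ge0.
split=> [pos | [t [pt_gt0 xt_gt0]]].
  have [t /= term_gt0] :=
    psumr_neq0P (fun t _ => term_ge0 t) (elimN eqP (lt0r_neq0 pos)).
  have := lt0r_neq0 term_gt0.
  rewrite mulf_eq0 negb_or => /andP [pt_neq0 /prodf_neq0 xt_neq0].
  exists t; split; first by rewrite lt_def pt_neq0 p_ge0.
  by move=> i; rewrite lt_def xt_neq0 ?x_ge0.
rewrite /pext (bigD1 t) //=.
have : 0 <= \sum_(b | b != t) p b * \prod_j x j (b j) by rewrite sumr_ge0.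
have : 0 < p t * \prod_j x j (t j) by rewrite mulr_gt0 ?prodr_gt0.
lra.
Qed.

Lemma deviate_ge0 K (a : profile A) (x : forall i, A i -> R) :
  (forall i s, 0 <= x i s) -> forall i (s : A i), 0 <= deviate K a x s.
Proof. by move=> x_ge0 i s; rewrite /deviate; case: (i \in K). Qed.

Lemma deviate_gt0E K (a : profile A) (x : forall i, A i -> R) i (s : A i) :
  (0 < deviate K a x s) = if i \in K then s == a i else 0 < x i s.
Proof. by rewrite /deviate; case: (i \in K); rewrite // ltr0n lt0b. Qed.

End MultilinearExtension.

Lemma subset_set2_notin (T : finType) (S : {set T}) x y :
  S \subset [set x; y] -> x \notin S -> S \subset [set y].
Proof.
move=> /subsetP Sxy xS; apply/subsetP => z zS.
by have := Sxy z zS; rewrite !inE => /orP [/eqP zx | //]; rewrite -zx zS in xS.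
Qed.

Section Component.
Variables (I : finType) (A : I -> finType) (R : realFieldType).
Variables (p : profile A -> R) (a0 : profile A).
Hypothesis p_ge0 : forall a, 0 <= p a.
Hypothesis p_a0 : p a0 = 0.
Local Notation C := (component p a0).

Lemma adjB_sym : symmetric (adjB p).
Proof.
suff adjBW u v : adjB p u v -> adjB p v u by move=> u v; apply/idP/idP; apply: adjBW.
case/and3P=> pu pv /existsP [i /forallP uv]; rewrite /adjB pu pv /=.
apply/existsP; exists i; apply/forallP => j.
by move: (uv j); case: (j != i) => //= /eqP ->.
Qed.

Lemma mem_component_a0 : a0 \in C.
Proof. by rewrite inE connect0. Qed.

Lemma component_p0 u : u \in C -> p u = 0.
Proof.
rewrite inE => /connectP [s a0s ->] {u}.
elim: s a0 p_a0 a0s => [//|v s IHs] u _ /= /andP [/and3P [_ /eqP pv _]]; exact: IHs.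
Qed.

Lemma component_connect u v : u \in C -> v \in C -> connect (adjB p) u v.
Proof. by rewrite !inE (sym_connect_sym adjB_sym); apply: connect_trans. Qed.

Lemma component_step u v i : u \in C -> p v = 0 ->
  (forall k, k != i -> u k = v k) -> v \in C.
Proof.
move=> uC pv uv; move: (uC); rewrite !inE => /connect_trans; apply; apply: connect1.
rewrite /adjB (component_p0 uC) pv !eqxx; apply/existsP; exists i.
by apply/forallP => k; apply/implyP => /uv ->.
Qed.

Lemma pure_X_of d : d \in C -> X_of C (pure R d).
Proof.
move=> dC; split=> [i | a a_supp].
  split=> [s | ]; first by rewrite ler0n.
  by rewrite (bigD1 (d i)) //= /pure eqxx big1 ?addr0 // => s /negbTE ->.
suff -> : a = d by [].
by apply/ffunP => i; move: (a_supp i); rewrite ltr0n lt0b => /eqP.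
Qed.

Lemma X_of_full_support (x : forall i, A i -> R) : X_of C x ->
  exists2 y, y \in C & forall i, 0 < x i (y i).
Proof.
case=> mixed supp; suff [y y_gt0] : exists y : profile A, forall i, 0 < x i (y i).
  by exists y => //; apply: supp.
have x_gt0 i : exists s, 0 < x i s.
  have [x_ge0 sum1] := mixed i.
  have [s /andP [_ xs_gt0]] : exists s, true && (0 < x i s).
    apply: psumr_neq0P => [s _|]; first exact: x_ge0.
    by rewrite sum1; apply/eqP; rewrite oner_neq0.
  by exists s.
exists (finfun (fun i => xchoose (x_gt0 i))) => i.
by rewrite ffunE (xchooseP (x_gt0 i)).
Qed.

Lemma X_of_support (x : forall i, A i -> R) (v : profile A) i :
  X_of C x -> 0 < x i (v i) -> exists2 u, u \in C & u i = v i.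
Proof.
move=> xX xv_gt0; have [y _ y_gt0] := X_of_full_support xX.
exists (splice [set i] v y); last by rewrite spliceE set11.
by apply: xX.2 => k; rewrite spliceE inE; case: eqVneq => [-> | _].
Qed.

Lemma rectangular_no_joint_exit : rectangular C ->
  forall x, X_of C x -> forall J a, ~ is_joint_exit p x J a.
Proof.
move=> [Bi CE] x xX J a [[_ [exit_gt0 exit_min]] J_ge2].
have x_ge0 i s : 0 <= x i s := (xX.1 i).1 s.
have supp_in_Bi j (b : profile A) : 0 < x j (b j) -> b j \in Bi j.
  by move=> xb_gt0; have [u uC <-] := X_of_support xX xb_gt0; apply: (CE u).1.
have [b [pb_gt0 b_gt0]] := (pext_gt0P p_ge0 (deviate_ge0 J a x_ge0)).1 exit_gt0.
have [i iJ aiB] : exists2 i, i \in J & a i \notin Bi i.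
  have [i biB] : exists i, b i \notin Bi i.
    apply/existsP; apply: contraTT pb_gt0 => /existsPn bB.
    by rewrite component_p0 ?ltxx //; apply/CE => i; apply/negPn.
  move: (b_gt0 i); rewrite deviate_gt0E; case: ifP => [iJ /eqP bi | _ /supp_in_Bi].
    by exists i; rewrite // -bi.
  by rewrite (negbTE biB).
have [y yC y_gt0] := X_of_full_support xX.
pose t := splice [set i] a y.
have pt_gt0 : 0 < p t.
  rewrite lt_def p_ge0 andbT; apply: contraNneq aiB => pt0.
  have tC : t \in C.
    apply: (component_step yC pt0 (i := i)) => k ki.
    by rewrite spliceE inE (negbTE ki).
  by have := (CE t).1 tC i; rewrite spliceE set11.
have := exit_min [set i]; rewrite properEcard sub1set iJ cards1 J_ge2 => /(_ isT).
apply/eqP; rewrite gt_eqF //; apply/(pext_gt0P p_ge0 (deviate_ge0 _ a x_ge0)).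
by exists t; split=> // k; rewrite deviate_gt0E spliceE inE; case: eqVneq.
Qed.

Section NoPureJointExit.
Hypothesis no_pure_joint_exit :
  forall d J (a : profile A), d \in C -> ~ is_joint_exit p (pure R d) J a.

Lemma mem_component_splice2 g (a : profile A) i k : g \in C -> i != k ->
  splice [set i] a g \in C -> splice [set k] a g \in C ->
  splice [set i; k] a g \in C.
Proof.
move=> gC ik giC gkC.
have sub1_in j (J' : {set I}) :
    splice [set j] a g \in C -> J' \subset [set j] -> splice J' a g \in C.
  by move=> gjC; rewrite subset1 => /orP [] /eqP ->; rewrite ?splice0.
have p0 : p (splice [set i; k] a g) = 0.
  apply/eqP; apply: contraT => p_neq0.
  case: (no_pure_joint_exit (J := [set i; k]) (a := a) gC).
  split; last by rewrite cards2 ik.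
  split; first by apply/set0Pn; exists i; rewrite !inE eqxx.
  split; first by rewrite pext_deviate_pure lt_def p_neq0 p_ge0.
  move=> J' /properP [J'ik [j /set2P jik jJ']]; rewrite pext_deviate_pure.
  apply: component_p0; case: jik jJ' => -> jJ'.
    by apply: (sub1_in k) => //; apply: subset_set2_notin J'ik jJ'.
  apply: (sub1_in i) => //; rewrite setUC in J'ik.
  exact: subset_set2_notin J'ik jJ'.
apply: (component_step giC p0 (i := k)) => l lk.
by rewrite !spliceE !inE (negbTE lk) orbF.
Qed.

Lemma mem_component_splice1 e u k : e \in C -> u \in C -> splice [set k] e u \in C.
Proof.
move=> eC /(component_connect eC) /connectP [s es ->] {u}.
elim/last_ind: s es => [|s g' IHs]; first by rewrite /= splice_id.
rewrite rcons_path last_rcons.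
case/andP=> es /and3P [_ /eqP pg' /existsP [i /forallP gg']].
have {}IHs := IHs es; set g := last e s in IHs gg' *.
have g_eq l : l != i -> g l = g' l by move=> li; move: (gg' l); rewrite li => /eqP.
have gC : g \in C.
  by move: eC; rewrite !inE => /connect_trans; apply; apply/connectP; exists s.
have g'C : g' \in C := component_step gC pg' g_eq.
have [ik | ik] := eqVneq i k.
  subst i; rewrite (_ : splice _ e g' = splice [set k] e g) //.
  by apply/ffunP => l; rewrite !spliceE inE; case: eqVneq => // /g_eq.
rewrite (_ : splice _ e g' = splice [set i; k] (splice [set k] e g') g).
  apply: mem_component_splice2 => //.
    rewrite (_ : splice _ _ g = g') //; apply/ffunP => l; rewrite !spliceE !inE.
    by case: eqVneq => [-> | /g_eq //]; rewrite (negbTE ik).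
  rewrite (_ : splice _ _ g = splice [set k] e g) //; apply/ffunP => l.
  by rewrite !spliceE !inE; case: eqVneq.
apply/ffunP => l; rewrite !spliceE !inE.
by case: (eqVneq l k) => [// | lk]; case: eqVneq => [-> | /g_eq] //=; rewrite orbF.
Qed.

Lemma no_pure_joint_exit_rectangular : rectangular C.
Proof.
exists (fun i => [set (u : profile A) i | u in C]) => a.
split=> [aC i | aB]; first exact: imset_f.
have [u uC ua] : exists2 u, u \in C & forall k, k \in enum I -> u k = a k.
  elim: (enum I) => [|k s [u uC ua]]; first by exists a0; rewrite ?mem_component_a0.
  have /imsetP [e eC ek] := aB k.
  exists (splice [set k] e u); first exact: mem_component_splice1.
  by move=> j; rewrite spliceE !inE; case: eqVneq => [-> | _ /= /ua].
by rewrite (_ : a = u) //; apply/ffunP => k; rewrite ua ?mem_enum.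
Qed.

End NoPureJointExit.

End Component.

Theorem mainTheorem6 (I : finType) (A : I -> finType) (R : realFieldType)
  (hA : forall i : I, (0 < #|A i|)%N)
  (p : profile A -> R) (hp : forall a, 0 <= p a <= 1)
  (a0 : profile A) (ha0 : p a0 = 0) :
  rectangular (component p a0) <->
  (forall x : forall i : I, A i -> R, X_of (component p a0) x ->
     forall (J : {set I}) (a : profile A), ~ is_joint_exit p x J a).
Proof.
have p_ge0 a : 0 <= p a by case/andP: (hp a).
split; first exact: rectangular_no_joint_exit.
move=> no_joint_exit; apply: no_pure_joint_exit_rectangular => // d J a dC.
exact: (no_joint_exit (pure R d) (pure_X_of dC) J a).
Qed.
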